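(* Let $G$ be a group and let $n$ be the cardinality of the set of path-components of $|L(G)|$. Then $H_1(|\mathcal{C}(G)|;\mathbb{Z})$ has rank at least $n-1$ (infinite rank if $n$ is infinite). In particular, if $|L(G)|$ is disconnected then $|\mathcal{C}(G)|$ is not simply connected.
   Context: For a group $G$, the coset poset $\mathcal{C}(G)$ is the set of left cosets of all proper subgroups of $G$ (including the trivial subgroup), ordered by inclusion; $L(G)$ is the poset of proper nontrivial subgroups of $G$ ordered by inclusion; $|P|$ denotes the geometric realization of the order complex (chains) of $P$. *)

From HB Require Import structures.
From mathcomp Require Import all_boot all_algebra.
From mathcomp Require Import boolp classical_sets.
Set Implicit Arguments. Unset Strict Implicit. Unset Printing Implicit Defensive.
Import GRing.Theory.
Local Open Scope classical_set_scope.
Local Open Scope ring_scope.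

Definition group_axioms (T : Type) (mul : T -> T -> T) (one : T) (inv : T -> T) : Prop :=
  [/\ (forall x y z, mul x (mul y z) = mul (mul x y) z),
      (forall x, mul one x = x) &
      (forall x, mul (inv x) x = one)].

Definition is_subgroup (T : Type) (mul : T -> T -> T) (one : T) (inv : T -> T)
  (H : set T) : Prop :=
  [/\ H one, (forall x y, H x -> H y -> H (mul x y)) & (forall x, H x -> H (inv x))].

Definition proper_subgroup T mul one inv (H : set T) : Prop :=
  @is_subgroup T mul one inv H /\ H <> [set: T].

Definition L_vertex T mul one inv (H : set T) : Prop :=
  @proper_subgroup T mul one inv H /\ H <> [set one].

Definition lcoset T (mul : T -> T -> T) (g : T) (H : set T) : set T := mul g @` H.

Definition C_vertex T mul one inv (C : set T) : Prop :=
  exists g H, @proper_subgroup T mul one inv H /\ C = lcoset mul g H.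

(* strict inclusion, the order of both posets *)
Definition slt T (A B : set T) : Prop := A `<=` B /\ A <> B.

(* ---------- path components of |P| for a poset (V, <=) ----------
   Two points of the realization of the order complex lie in the same path
   component iff their vertices are joined by a zigzag of comparable elements. *)
Definition comparable T (V : set (set T)) (A B : set T) : Prop :=
  V A /\ V B /\ (A `<=` B \/ B `<=` A).

Inductive zigzag T (V : set (set T)) : set T -> set T -> Prop :=
| zz_refl A : V A -> zigzag V A A
| zz_step A B C : comparable V A B -> zigzag V B C -> zigzag V A C.

(* ---------- simplicial homology H_1(|P|; Z) of the order complex ----------
   Simplices of the order complex are chains; we orient them by the order.
   Finitely supported integer chains are represented as formal sums (lists). *)
Definition chain1 T := seq (int * (set T * set T)).
Definition chain2 T := seq (int * (set T * set T * set T)).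

Definition edge T (V : set (set T)) (e : set T * set T) : Prop :=
  V e.1 /\ V e.2 /\ slt e.1 e.2.
Definition triangle T (V : set (set T)) (t : set T * set T * set T) : Prop :=
  V t.1.1 /\ V t.1.2 /\ V t.2 /\ slt t.1.1 t.1.2 /\ slt t.1.2 t.2.

Definition valid1 T V (c : chain1 T) : Prop := forall x, x \in c -> edge V x.2.
Definition valid2 T V (c : chain2 T) : Prop := forall x, x \in c -> triangle V x.2.

Definition coef1 T (c : chain1 T) (e : set T * set T) : int :=
  \sum_(x <- c) (if asbool (x.2 = e) then x.1 else 0).

Definition ind T (a b : set T) : int := if asbool (a = b) then 1 else 0.

Definition bd1 T (c : chain1 T) (v : set T) : int :=
  \sum_(x <- c) x.1 * (ind x.2.2 v - ind x.2.1 v).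

Definition bd2 T (w : chain2 T) : chain1 T :=
  flatten [seq [:: (x.1, (x.2.1.2, x.2.2)); (- x.1, (x.2.1.1, x.2.2));
                  (x.1, (x.2.1.1, x.2.1.2))] | x <- w].

Definition cycle1 T V (z : chain1 T) : Prop := @valid1 T V z /\ forall v, bd1 z v = 0.

Definition scale1 T (k : int) (c : chain1 T) : chain1 T := [seq (k * x.1, x.2) | x <- c].

Definition comb1 T (m : nat) (a : 'I_m -> int) (z : 'I_m -> chain1 T) : chain1 T :=
  flatten [seq scale1 (a i) (z i) | i <- enum 'I_m].

(* z is a boundary (as a finitely supported function on edges) *)
Definition is_boundary1 T V (z : chain1 T) : Prop :=
  exists w : chain2 T, @valid2 T V w /\ forall e, coef1 z e = coef1 (bd2 w) e.

(* rank H_1(|P|; Z) >= m : there are m cycles whose classes are Z-linearly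
   independent in H_1 = Z_1 / B_1 *)
Definition H1_rank_ge T (V : set (set T)) (m : nat) : Prop :=
  exists z : 'I_m -> chain1 T,
    (forall i, cycle1 V (z i)) /\
    forall a : 'I_m -> int, is_boundary1 V (comb1 a z) -> forall i, a i = 0.

From Pilot Require Import Defs.
From mathcomp Require Import all_boot all_algebra.
From mathcomp Require Import boolp classical_sets.
From mathcomp Require Import ring.
Set Implicit Arguments. Unset Strict Implicit. Unset Printing Implicit Defensive.
Import GRing.Theory.
Local Open Scope classical_set_scope.
Local Open Scope ring_scope.

(* The vertices of C(G) lying above the trivial coset {1} are exactly the
   subgroups in L(G), so every component X of |L(G)| yields a 1-cocycle on
   |C(G)|: the indicator of the edges ({1}, B) with B in X, a cocycle because
   the two edges at {1} of a triangle {1} < B < B' land in one component.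
   Given h in H_0 and
   y in H_j, both nontrivial, the loop
     {1} < H_j > {y} < yH_0 > {yh} < H_j h > {h} < H_0 > {1}
   is a 1-cycle that leaves {1} through H_j and returns through H_0; the cocycle
   of the component of H_i takes the value [i = j] on it (the middle vertex {yh}
   is not {1} since H_j and H_0 lie in different components).  Evaluating a
   linear relation between these loops on the cocycles kills every coefficient. *)

Lemma asbool_eqE (E : eqType) (a b : E) : `[< a = b >] = (b == a).
Proof. by apply/asboolP/eqP => ->. Qed.

Lemma slt_neq_set1 T (A B : set T) x y : slt A B -> A x -> B <> [set y].
Proof.
move=> [AB nAB] Ax eB; apply: nAB; rewrite eB; apply/seteqP; split=> [z Az|z ->].
  by move: (AB _ Az); rewrite eB.
by move: (AB _ Ax); rewrite eB /= => <-.
Qed.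

Section KroneckerPairing.
Variable T : Type.
Implicit Types (V : set (set T)) (f : set T * set T -> int) (c : chain1 T).

Definition pairing f c : int := \sum_(x <- c) x.1 * f x.2.

Lemma pairing_coef f c (s : seq (set T * set T)) :
  uniq s -> {subset map snd c <= s} ->
  pairing f c = \sum_(e <- s) Defs.coef1 c e * f e.
Proof.
move=> s_uniq c_s; rewrite /pairing /Defs.coef1.
under [RHS]eq_bigr do rewrite mulr_suml.
rewrite exchange_big /=; apply: eq_big_seq => x xc.
rewrite (bigD1_seq x.2) ?c_s ?map_f //= asbool_eqE eqxx big1_seq ?addr0 // => e /andP[ne _].
by rewrite asbool_eqE (negbTE ne) mul0r.
Qed.

Lemma pairing_eq_coef f c c' :
  (forall e, Defs.coef1 c e = Defs.coef1 c' e) -> pairing f c = pairing f c'.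
Proof.
move=> eq_cc'; pose s := undup (map snd (c ++ c')).
rewrite (@pairing_coef f c s) ?(@pairing_coef f c' s) ?undup_uniq //.
- by apply: eq_bigr => e _; rewrite eq_cc'.
- by move=> e ec'; rewrite mem_undup map_cat mem_cat ec' orbT.
- by move=> e ec; rewrite mem_undup map_cat mem_cat ec.
Qed.

Lemma pairing_cat f c c' : pairing f (c ++ c') = pairing f c + pairing f c'.
Proof. by rewrite /pairing big_cat. Qed.

Lemma pairing_scale f k c : pairing f (scale1 k c) = k * pairing f c.
Proof. by rewrite /pairing big_map big_distrr; apply: eq_bigr => x _ /=; rewrite mulrA. Qed.

Lemma pairing_comb f m (a : 'I_m -> int) (z : 'I_m -> chain1 T) :
  pairing f (comb1 a z) = \sum_(i <- enum 'I_m) a i * pairing f (z i).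
Proof.
rewrite /comb1; elim: (enum 'I_m) => [|i r IHr]; first by rewrite big_nil /pairing big_nil.
by rewrite /= pairing_cat IHr big_cons pairing_scale.
Qed.

Definition cocycle1 V f : Prop :=
  forall a b c : set T, triangle V (a, b, c) -> f (b, c) - f (a, c) + f (a, b) = 0.

Lemma pairing_bd2 V f w : cocycle1 V f -> valid2 V w -> pairing f (bd2 w) = 0.
Proof.
move=> f_cocycle; elim: w => [|[k [[a b] c]] w IHw] w_valid; first by rewrite /pairing big_nil.
have -> : bd2 ((k, (a, b, c)) :: w) =
          [:: (k, (b, c)); (- k, (a, c)); (k, (a, b))] ++ bd2 w by [].
rewrite pairing_cat IHw => [|x xw]; last by apply: w_valid; rewrite in_cons xw orbT.
have f_abc := f_cocycle _ _ _ (w_valid _ (mem_head _ _)).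
rewrite /pairing !big_cons big_nil /=.
by transitivity (k * (f (b, c) - f (a, c) + f (a, b))); [ring | rewrite f_abc mulr0].
Qed.

Lemma H1_rank_ge_dual V m (z : 'I_m -> chain1 T) (f : 'I_m -> set T * set T -> int) :
  (forall i, cycle1 V (z i)) -> (forall i, cocycle1 V (f i)) ->
  (forall i j, pairing (f i) (z j) = (i == j)%:R) -> H1_rank_ge V m.
Proof.
move=> z_cycle f_cocycle fz; exists z; split=> // a [w [w_valid bd_w]] i.
have := pairing_eq_coef (f i) bd_w.
rewrite (pairing_bd2 (f_cocycle i) w_valid) pairing_comb.
rewrite (bigD1_seq i) ?mem_enum ?enum_uniq //= fz eqxx mulr1.
rewrite big1_seq ?addr0 // => j /andP[ji _].
by rewrite fz eq_sym (negbTE ji) mulr0.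
Qed.

Definition wedge (x : T) (B : set T) (y : T) : chain1 T :=
  [:: (1, ([set x], B)); (-1, ([set y], B))].

Lemma valid1_cat V c c' : valid1 V c -> valid1 V c' -> valid1 V (c ++ c').
Proof. by move=> vc vc' e; rewrite mem_cat => /orP[/vc|/vc']. Qed.

Lemma valid1_wedge V x B y :
  edge V ([set x], B) -> edge V ([set y], B) -> valid1 V (wedge x B y).
Proof. by move=> ex ey e; rewrite !inE => /orP[|] /eqP ->. Qed.

Lemma bd1_cat c c' v : bd1 (c ++ c') v = bd1 c v + bd1 c' v.
Proof. by rewrite /bd1 big_cat. Qed.

Lemma bd1_wedge x B y v : bd1 (wedge x B y) v = ind [set y] v - ind [set x] v.
Proof. rewrite /bd1 !big_cons big_nil /=; ring. Qed.

Lemma pairing_wedge f x B y : pairing f (wedge x B y) = f ([set x], B) - f ([set y], B).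
Proof. rewrite /pairing !big_cons big_nil /=; ring. Qed.

End KroneckerPairing.

Section Zigzag.
Variables (T : Type) (V : set (set T)).

Lemma comparable_sym A B : Defs.comparable V A B -> Defs.comparable V B A.
Proof. by case=> VA [VB AB]; split=> //; split=> //; case: AB; [right|left]. Qed.

Lemma zigzag_trans A B C : zigzag V A B -> zigzag V B C -> zigzag V A C.
Proof. by elim=> // A' B' C' cAB _ IH /IH; apply: zz_step. Qed.

Lemma zigzag_comparable X B C :
  Defs.comparable V B C -> zigzag V X B <-> zigzag V X C.
Proof.
move=> cBC; have [VB [VC _]] := cBC.
split=> zz; apply: (zigzag_trans zz).
  exact: zz_step cBC (zz_refl VC).
exact: zz_step (comparable_sym cBC) (zz_refl VB).
Qed.

End Zigzag.

Section CosetPoset.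
Variables (T : Type) (mul : T -> T -> T) (one : T) (inv : T -> T).
Hypothesis hG : group_axioms mul one inv.

Local Notation L := (L_vertex mul one inv).
Local Notation C := (C_vertex mul one inv).
Local Notation proper := (proper_subgroup mul one inv).

Let mulA x y z : mul x (mul y z) = mul (mul x y) z. Proof. by case: hG. Qed.
Let mul1g x : mul one x = x. Proof. by case: hG. Qed.
Let mulVg x : mul (inv x) x = one. Proof. by case: hG. Qed.

Let mulgV x : mul x (inv x) = one.
Proof.
by rewrite -[mul x _]mul1g -{1}(mulVg (inv x)) -mulA (mulA (inv x)) mulVg mul1g mulVg.
Qed.

Let mulg1 x : mul x one = x.
Proof. by rewrite -(mulVg x) mulA mulgV mul1g. Qed.

Let mulg_eq1 x y : mul x y = one -> y = inv x.
Proof. by move=> xy1; rewrite -[y]mul1g -(mulVg x) -mulA xy1 mulg1. Qed.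

Let mulg_idl x y : mul x y = x -> y = one.
Proof. by move=> xy; rewrite -[y]mul1g -(mulVg x) -mulA xy. Qed.

Let mulg_idr x y : mul x y = y -> x = one.
Proof. by move=> xy; rewrite -[x]mulg1 -(mulgV y) mulA xy. Qed.

Lemma L_vertex_nontrivial A : L A -> exists2 x, A x & x <> one.
Proof.
move=> [[[A1 _ _] _] A_ne1]; apply: contrapT => nex; apply: A_ne1.
apply/seteqP; split=> [x Ax|_ ->] //=.
by apply: contrapT => x1; apply: nex; exists x.
Qed.

Lemma L_vertex_setI A B b : L A -> L B -> A b -> B b -> b <> one -> L (A `&` B).
Proof.
move=> [[[A1 AM AV] AT] _] [[[B1 BM BV] _] _] Ab Bb b1.
split; first split; first split.
- by split.
- by move=> x y [Ax Bx] [Ay By]; split; [apply: AM|apply: BM].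
- by move=> x [Ax Bx]; split; [apply: AV|apply: BV].
- move=> ABT; apply: AT; apply/seteqP; split=> x // _.
  by have [] : (A `&` B) x by rewrite ABT.
- move=> AB1; apply: b1; have : (A `&` B) b by split.
  by rewrite AB1.
Qed.

Lemma mulg_neq1_disconnected A B a b :
  L A -> L B -> ~ zigzag L A B -> A a -> B b -> b <> one -> mul a b <> one.
Proof.
move=> LA LB nAB Aa Bb b1 ab1; apply: nAB.
have Ab : A b by rewrite (mulg_eq1 ab1); case: LA => [[[_ _ AV] _] _]; apply: AV.
have LAB := L_vertex_setI LA LB Ab Bb b1.
apply: (@zz_step _ _ _ (A `&` B)); first by split=> //; split=> //; right=> x [].
apply: (@zz_step _ _ _ B); first by split=> //; split=> //; left=> x [].
exact: zz_refl.
Qed.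

Lemma C_vertex_lcoset g K : proper K -> C (lcoset mul g K).
Proof. by move=> pK; exists g, K. Qed.

Lemma C_vertex_subgroup K : proper K -> C K.
Proof.
move=> pK; exists one, K; split=> //.
by apply/seteqP; split=> [x Kx|_ [x Kx <-]]; [exists x; rewrite ?mul1g | rewrite mul1g].
Qed.

Lemma C_vertex_set1 t g : t <> one -> C [set g].
Proof.
move=> t1; exists g, [set one]; split; first split; first split.
- by [].
- by move=> x y -> ->; rewrite mul1g.
- by move=> x ->; rewrite -[inv one]mulg1 mulVg.
- by move=> e; apply: t1; have : [set: T] t by []; rewrite -e.
by apply/seteqP; split=> [_ ->|_ [_ -> <-]]; [exists one; rewrite ?mulg1 | rewrite mulg1].
Qed.

Lemma C_vertex_nonempty K : C K -> exists x, K x.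
Proof. by move=> [g [K' [[[K1 _ _] _] ->]]]; exists (mul g one), one. Qed.

Lemma C_vertex_proper K : C K -> K one -> proper K.
Proof.
move=> [g [K' [[[K1 KM KV] KT] ->]]] [k Kk gk].
have gK : K' g.
  have -> : g = inv k by rewrite -[g]mulg1 -(mulgV k) mulA gk mul1g.
  exact: KV.
suff -> : lcoset mul g K' = K' by split.
apply/seteqP; split=> [_ [x Kx <-]|x Kx]; first exact: KM.
by exists (mul k x); [apply: KM | rewrite mulA gk mul1g].
Qed.

Lemma L_vertex_of_C K : C K -> K one -> K <> [set one] -> L K.
Proof. by move=> CK K1 K_ne1; split=> //; apply: C_vertex_proper. Qed.

Lemma proper_conjg A g : proper A -> proper [set x | A (mul (mul g x) (inv g))].
Proof.
move=> [[A1 AM AV] AT].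
have conjM x y : mul (mul g (mul x y)) (inv g) =
                 mul (mul (mul g x) (inv g)) (mul (mul g y) (inv g)).
  by rewrite !mulA -(mulA _ (inv g)) mulVg mulg1.
have conjV x : mul (mul g (inv x)) (inv g) = inv (mul (mul g x) (inv g)).
  by apply: mulg_eq1; rewrite -conjM mulgV mulg1 mulgV.
split; first split => /=.
- by rewrite mulg1 mulgV.
- by move=> x y Ax Ay; rewrite conjM; apply: AM.
- by move=> x Ax; rewrite conjV; apply: AV.
move=> eT; apply: AT; apply/seteqP; split=> t // _.
have : [set x | A (mul (mul g x) (inv g))] (mul (mul (inv g) t) g) by rewrite eT.
by rewrite /= !mulA mulgV mul1g -mulA mulgV mulg1.
Qed.

(* [set x | A (g x g^-1)] is the conjugate g^-1 A g *)
Lemma rcoset_conjg A g :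
  [set mul x g | x in A] = lcoset mul g [set x | A (mul (mul g x) (inv g))].
Proof.
apply/seteqP; split=> _ /= [y Ay <-].
- exists (mul (mul (inv g) y) g); first by rewrite /= !mulA mulgV mul1g -mulA mulgV mulg1.
  by rewrite !mulA mulgV mul1g.
- by exists (mul (mul g y) (inv g)) => //; rewrite -mulA mulVg mulg1.
Qed.

Lemma C_vertex_rcoset A g : proper A -> C [set mul x g | x in A].
Proof. by move=> pA; rewrite rcoset_conjg; apply/C_vertex_lcoset/proper_conjg. Qed.

Lemma edge_set1 B x y : C B -> B x -> B y -> x <> y -> edge C ([set x], B).
Proof.
move=> CB Bx By xy; split; [|split=> //; split].
- have [x1|x_ne1] := pselect (x = one); last exact: C_vertex_set1 x_ne1.
  by apply: (@C_vertex_set1 y) => y1; apply: xy; rewrite x1 y1.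
- by move=> z ->.
- by move=> /= eB; apply: xy; move: By; rewrite -eB => ->.
Qed.

Lemma valid1_wedge_C B x y : C B -> B x -> B y -> x <> y -> valid1 C (wedge x B y).
Proof.
move=> CB Bx By xy.
by apply: valid1_wedge; [exact: edge_set1 Bx By xy | exact: edge_set1 By Bx (nesym xy)].
Qed.

Definition coset_loop a b (A B : set T) : chain1 T :=
  wedge one A a ++ wedge a (lcoset mul a B) (mul a b) ++
  wedge (mul a b) [set mul x b | x in A] b ++ wedge b B one.

Lemma coset_loop_cycle a b A B : proper A -> proper B -> A a -> B b ->
  a <> one -> b <> one -> cycle1 C (coset_loop a b A B).
Proof.
move=> pA pB Aa Bb a1 b1; have [[A1 _ _] _] := pA; have [[B1 _ _] _] := pB.
split; last by move=> v; rewrite !bd1_cat !bd1_wedge; ring.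
apply: valid1_cat; [|apply: valid1_cat; [|apply: valid1_cat]].
- exact: valid1_wedge_C (C_vertex_subgroup pA) A1 Aa (nesym a1).
- apply: valid1_wedge_C (C_vertex_lcoset a pB) _ _ _; first by exists one; rewrite ?mulg1.
    by exists b.
  by move=> /esym /mulg_idl /b1.
- apply: valid1_wedge_C (C_vertex_rcoset b pA) _ _ _; first by exists a.
    by exists one; rewrite ?mul1g.
  by move=> /mulg_idr /a1.
- exact: valid1_wedge_C (C_vertex_subgroup pB) Bb B1 b1.
Qed.

Definition component_cochain (X : set T) (e : set T * set T) : int :=
  (`[< e.1 = [set one] /\ zigzag L X e.2 >])%:R.

Lemma component_cochain_eq0 X e : e.1 <> [set one] -> component_cochain X e = 0.
Proof. by move=> e_ne1; rewrite /component_cochain asboolF // => -[]. Qed.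

Lemma component_cochain_set1 X B :
  component_cochain X ([set one], B) = (`[< zigzag L X B >])%:R.
Proof.
by rewrite /component_cochain /= (asbool_equiv_eq (Q := zigzag L X B)) //; split=> [[]|].
Qed.

Lemma component_cochain_cocycle X : cocycle1 C (component_cochain X).
Proof.
move=> a b c [/= Ca [Cb [Cc [ab bc]]]].
have [g ag] := C_vertex_nonempty Ca.
have b_ne1 : b <> [set one] := slt_neq_set1 ab ag.
rewrite (@component_cochain_eq0 _ (b, c)) //.
have [a1|a_ne1] := pselect (a = [set one]); last first.
  by rewrite !component_cochain_eq0 // subrr addr0.
have b1 : b one by apply: ab.1; rewrite a1.
have Lb : L b := L_vertex_of_C Cb b1 b_ne1.
have Lc : L c := L_vertex_of_C Cc (bc.1 _ b1) (slt_neq_set1 bc b1).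
have cbc : Defs.comparable L b c by split=> //; split=> //; left; case: bc.
by rewrite a1 !component_cochain_set1 (asbool_equiv_eq (zigzag_comparable X cbc)) add0r addNr.
Qed.

Lemma pairing_coset_loop X a b A B : a <> one -> b <> one -> mul a b <> one ->
  pairing (component_cochain X) (coset_loop a b A B) =
  component_cochain X ([set one], A) - component_cochain X ([set one], B).
Proof.
have set1_eq0 g B' : g <> one -> component_cochain X ([set g], B') = 0.
  move=> g1; apply: component_cochain_eq0 => /= e; apply: g1.
  by have : [set g] g by []; rewrite e.
move=> a1 b1 ab1.
rewrite !pairing_cat !pairing_wedge !(set1_eq0 a) // !(set1_eq0 b) //.
by rewrite !(set1_eq0 (mul a b)) // subrr !add0r subr0.
Qed.

End CosetPoset.

Theorem mainTheorem12 (T : Type) (mul : T -> T -> T) (one : T) (inv : T -> T)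
  (hG : group_axioms mul one inv) (k : nat) (H : 'I_k.+1 -> set T)
  (hL : forall i, L_vertex mul one inv (H i))
  (hdist : forall i j, i != j -> ~ zigzag (L_vertex mul one inv) (H i) (H j)) :
  H1_rank_ge (C_vertex mul one inv) k.
Proof.
pose A j := H (lift ord0 j).
have [b H0b b1] := L_vertex_nontrivial (hL ord0).
have /choice[a Aa] j : exists a, A j a /\ a <> one.
  by have [x Ax x1] := L_vertex_nontrivial (hL (lift ord0 j)); exists x.
have ab1 j : mul (a j) b <> one.
  have lift_neq0 : lift ord0 j != ord0 by rewrite eq_sym neq_lift.
  exact: (mulg_neq1_disconnected hG (hL _) (hL ord0) (hdist _ _ lift_neq0) (Aa j).1 H0b b1).
apply: (@H1_rank_ge_dual _ _ _ (fun j => coset_loop mul one (a j) b (A j) (H ord0))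
                                (fun i => component_cochain mul one inv (A i))).
- move=> j; have [Aj_a aj1] := Aa j.
  by apply: coset_loop_cycle => //; [case: (hL (lift ord0 j)) | case: (hL ord0)].
- by move=> i; apply: component_cochain_cocycle.
move=> i j; rewrite pairing_coset_loop; [|exact: (Aa j).2|exact: b1|exact: ab1].
rewrite !component_cochain_set1 /A.
rewrite (asboolF (hdist _ ord0 _)) // subr0.
have [<-|ij] := eqVneq i j; first by rewrite asboolT //; apply: zz_refl.
by rewrite asboolF //; apply: hdist; rewrite (inj_eq lift_inj).
Qed.
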